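(* There exist preference-based argumentation frameworks $AF_p=(AR,Attacks,Prefs)$ and $AF'_p=(AR',Attacks',Prefs')$ with $AF_p\preceq_{RMP}AF'_p$ such that $\tau_{preferred}(AF'_p)\subseteq AR$ but $\tau_{preferred}(AF'_p)\neq\tau_{preferred}(AF_p)$.
   Context: A preference-based argumentation framework is a triple $(AR,Attacks,Prefs)$ where $AR$ is a finite set of arguments, $Attacks\subseteq AR\times AR$ (with $(b,a)\in Attacks$ read ''$b$ attacks $a$''), and $Prefs$ is a partial or total ordering on $AR$, written $a\succeq b$. $\tau_{preferred}(AF_p)=\{a\in AR: \text{for every } b\in AR,\ (b,a)\in Attacks\text{ implies } a\succeq b\}$. $AF_p\preceq_{NP}AF'_p$ (normal expansion) iff $AR\subseteq AR'$, $Attacks\subseteq Attacks'$, every $(a,b)\in Attacks'\setminus Attacks$ has $a\in AR'\setminus AR$ or $b\in AR'\setminus AR$, $Prefs\subseteq Prefs'$, and every $(a\succeq b)\in Prefs'\setminus Prefs$ has $a\in AR'\setminus AR$ or $b\in AR'\setminus AR$. An attack sequence in $(AR,Attacks)$ is $\langle a_1,\dots,a_n\rangle$ of pairwise distinct arguments with $(a_i,a_{i+1})\in Attacks$; $b$ is reachable from $a$ iff such a sequence has $a_1=a$, $a_n=b$. An attack cycle is $\langle a_1,\dots,a_n\rangle$ with $(a_i,a_{i+1})\in Attacks$, $a_1=a_n$ and $a_1,\dots,a_{n-1}$ pairwise distinct; $\mathcal C(AR,Attacks)$ is the set of attack cycles. $AF_p\preceq_{RMP}AF'_p$ (rational man's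 expansion) iff $AF_p\preceq_{NP}AF'_p$, $\mathcal C(AR',Attacks')=\mathcal C(AR,Attacks)$, and for all $a\in AR$, $b\in AR'\setminus AR$ with $b$ reachable from $a$ in $(AR',Attacks')$, $a$ occurs in no attack cycle of $(AR',Attacks')$. *)

From mathcomp Require Import all_boot.
Set Implicit Arguments. Unset Strict Implicit. Unset Printing Implicit Defensive.

(* A preference-based argumentation framework (AR, Attacks, Prefs).
   (a, b) \in prefs F  is read  a ⪰ b ;  (b, a) \in atts F  is read  b attacks a. *)
Record paf := PAF { args : seq nat; atts : seq (nat * nat); prefs : seq (nat * nat) }.

Definition wf_paf (F : paf) : Prop :=
  (forall a b, (a, b) \in atts F -> a \in args F /\ b \in args F) /\
  (forall a b, (a, b) \in prefs F -> a \in args F /\ b \in args F) /\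
  (forall a, a \in args F -> (a, a) \in prefs F) /\
  (forall a b, (a, b) \in prefs F -> (b, a) \in prefs F -> a = b) /\
  (forall a b c, (a, b) \in prefs F -> (b, c) \in prefs F -> (a, c) \in prefs F).

Definition in_tau_preferred (F : paf) (a : nat) : Prop :=
  a \in args F /\
  forall b, b \in args F -> (b, a) \in atts F -> (a, b) \in prefs F.

Definition normal_expansion (F F' : paf) : Prop :=
  {subset args F <= args F'} /\
  {subset atts F <= atts F'} /\
  (forall a b, (a, b) \in atts F' -> (a, b) \notin atts F ->
     (a \in args F') && (a \notin args F) \/ (b \in args F') && (b \notin args F)) /\
  {subset prefs F <= prefs F'} /\
  (forall a b, (a, b) \in prefs F' -> (a, b) \notin prefs F ->
     (a \in args F') && (a \notin args F) \/ (b \in args F') && (b \notin args F)).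

Definition attack_sequence (AR : seq nat) (Att : seq (nat * nat)) (s : seq nat) : Prop :=
  match s with
  | [::] => False
  | x :: t => all (fun y => y \in AR) s /\ uniq s /\
              path (fun u v => (u, v) \in Att) x t
  end.

Definition reachable (AR : seq nat) (Att : seq (nat * nat)) (a b : nat) : Prop :=
  exists s, attack_sequence AR Att s /\ head a s = a /\ last a s = b.

Definition attack_cycle (AR : seq nat) (Att : seq (nat * nat)) (s : seq nat) : Prop :=
  match s with
  | [::] => False
  | x :: t => 2 <= size s /\ all (fun y => y \in AR) s /\
              path (fun u v => (u, v) \in Att) x t /\
              last x t = x /\ uniq (belast x t)
  end.

Definition rm_expansion (F F' : paf) : Prop :=
  normal_expansion F F' /\
  (forall s, attack_cycle (args F') (atts F') s <-> attack_cycle (args F) (atts F) s) /\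
  (forall a b, a \in args F -> b \in args F' -> b \notin args F ->
     reachable (args F') (atts F') a b ->
     ~ (exists s, attack_cycle (args F') (atts F') s /\ a \in s)).

(* Add to the framework ({1, 2}, no attacks) a new argument 3, attacked by 1 and attacking 2,
   keeping only the trivial (reflexive) preferences.  The new graph is acyclic,
   so the expansion is a rational man's one.  Without strict preferences an
   argument is preferred exactly when it is unattacked, hence
   tau_preferred drops from {1, 2} to {1}: a subset of the old arguments,
   but a different one. *)
From mathcomp Require Import all_boot.

Set Implicit Arguments.
Unset Strict Implicit.
Unset Printing Implicit Defensive.

Definition identity_prefs (s : seq nat) : seq (nat * nat) := [seq (a, a) | a <- s].

Lemma mem_identity_prefs s a b : ((a, b) \in identity_prefs s) = (a == b) && (a \in s).
Proof.
apply/mapP/andP => [[c cs [-> ->]] | [/eqP <- aS]]; last by exists a.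
by rewrite eqxx.
Qed.

Lemma wf_paf_identity_prefs AR Att :
  (forall a b, (a, b) \in Att -> a \in AR /\ b \in AR) ->
  wf_paf (PAF AR Att (identity_prefs AR)).
Proof.
move=> attAR; rewrite /wf_paf /=.
split; first exact: attAR.
split; first by move=> a b; rewrite mem_identity_prefs => /andP[/eqP <-].
split; first by move=> a aAR; rewrite mem_identity_prefs eqxx.
split; first by move=> a b; rewrite mem_identity_prefs => /andP[/eqP].
by move=> a b c; rewrite !mem_identity_prefs => /andP[/eqP <-].
Qed.

Lemma in_tau_preferred_identity_prefs AR Att a :
  in_tau_preferred (PAF AR Att (identity_prefs AR)) a <->
  a \in AR /\ forall b, b \in AR -> (b, a) \in Att -> a = b.
Proof.
rewrite /in_tau_preferred /=; split=> -[aAR tau]; split=> // b bAR ba.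
  by have := tau b bAR ba; rewrite mem_identity_prefs => /andP[/eqP].
by rewrite mem_identity_prefs (tau b bAR ba) eqxx.
Qed.

Lemma normal_expansion_identity_prefs AR AR' Att Att' :
  {subset AR <= AR'} -> {subset Att <= Att'} ->
  (forall a b, (a, b) \in Att' -> (a, b) \notin Att ->
     (a \in AR') && (a \notin AR) \/ (b \in AR') && (b \notin AR)) ->
  normal_expansion (PAF AR Att (identity_prefs AR)) (PAF AR' Att' (identity_prefs AR')).
Proof.
move=> subAR subAtt newAtt; rewrite /normal_expansion /=.
do 3 (split=> //).
split; first by move=> [a b]; rewrite !mem_identity_prefs => /andP[-> /subAR].
move=> a b; rewrite !mem_identity_prefs => /andP[/eqP <- aAR'].
by rewrite eqxx aAR' /= => aAR; left.
Qed.

Lemma path_rank_lt_last (T : eqType) (e : rel T) (r : T -> nat) :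
  (forall u v, e u v -> r u < r v) ->
  forall t x, path e x t -> t != [::] -> r x < r (last x t).
Proof.
move=> rank_e; elim=> [//|y t IH] x /= /andP[exy pyt] _.
case: t IH pyt => [|z t] IH pyt; first exact: rank_e.
exact: ltn_trans (rank_e _ _ exy) (IH _ pyt isT).
Qed.

Lemma attack_cycle_ranked AR Att (r : nat -> nat) :
  (forall u v, (u, v) \in Att -> r u < r v) ->
  forall s, ~ attack_cycle AR Att s.
Proof.
move=> rank_Att [|x t] /=; first by move=> [].
move=> [size_s [_ [pxt [lastx _]]]].
have := path_rank_lt_last rank_Att pxt.
by case: t size_s pxt lastx => [//|y t] _ _ ->; rewrite ltnn => /(_ isT).
Qed.

Lemma attack_cycle_sub AR AR' Att Att' s :
  {subset AR <= AR'} -> {subset Att <= Att'} ->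
  attack_cycle AR Att s -> attack_cycle AR' Att' s.
Proof.
move=> subAR subAtt; case: s => [|x t] // [size_s [allAR [pxt cyc]]].
split=> //; split; first by apply: sub_all allAR; exact: subAR.
by split=> //; apply: sub_path pxt => u v /subAtt.
Qed.

Lemma rm_expansion_acyclic F F' :
  normal_expansion F F' -> (forall s, ~ attack_cycle (args F') (atts F') s) ->
  rm_expansion F F'.
Proof.
move=> exp acyclic'; split=> //; split.
  move=> s; split=> [/acyclic' // | cyc]; exfalso; apply: (acyclic' s).
  by case: exp => subAR [subAtt _]; exact: attack_cycle_sub cyc.
by move=> a b _ _ _ _ [s [/acyclic']].
Qed.

Definition paf_before : paf := PAF [:: 1; 2] [::] (identity_prefs [:: 1; 2]).

Definition paf_after : paf :=
  PAF [:: 1; 2; 3] [:: (1, 3); (3, 2)] (identity_prefs [:: 1; 2; 3]).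

Lemma paf_after_acyclic s : ~ attack_cycle (args paf_after) (atts paf_after) s.
Proof.
apply: (attack_cycle_ranked (r := index^~ [:: 1; 3; 2])).
by move=> u v; rewrite !inE => /orP[] /eqP[-> ->].
Qed.

Lemma rm_expansion_before_after : rm_expansion paf_before paf_after.
Proof.
apply: rm_expansion_acyclic paf_after_acyclic.
apply: normal_expansion_identity_prefs => //.
  by move=> a; rewrite !inE => /orP[] ->; rewrite ?orbT.
by move=> a b; rewrite !inE => /orP[] /eqP[-> ->] _; [right | left].
Qed.

Lemma in_tau_preferred_after a : in_tau_preferred paf_after a <-> a = 1.
Proof.
split=> [/in_tau_preferred_identity_prefs [] | ->].
  rewrite !inE => /or3P[/eqP -> // | /eqP -> | /eqP ->] unattacked.
    by have := unattacked 3; rewrite !inE => /(_ isT isT).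
  by have := unattacked 1; rewrite !inE => /(_ isT isT).
by apply/in_tau_preferred_identity_prefs; split=> // b; rewrite !inE => _ /orP[] /eqP[].
Qed.

Lemma in_tau_preferred_before a : in_tau_preferred paf_before a <-> a \in [:: 1; 2].
Proof.
by split=> [/in_tau_preferred_identity_prefs [] | aAR]; last exact/in_tau_preferred_identity_prefs.
Qed.

Theorem proposition50 :
  exists F F' : paf,
    wf_paf F /\ wf_paf F' /\ rm_expansion F F' /\
    (forall a, in_tau_preferred F' a -> a \in args F) /\
    ~ (forall a, in_tau_preferred F' a <-> in_tau_preferred F a).
Proof.
exists paf_before, paf_after.
split; first exact: wf_paf_identity_prefs.
split; first by apply: wf_paf_identity_prefs => a b; rewrite !inE => /orP[] /eqP[-> ->].
split; first exact: rm_expansion_before_after.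
split; first by move=> a /in_tau_preferred_after ->.
have tau_before_2 : in_tau_preferred paf_before 2 by apply/in_tau_preferred_before.
by move=> /(_ 2) [_ /(_ tau_before_2) /in_tau_preferred_after].
Qed.
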